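(* Let $k\geq 3$ and let $p$ be the POP of length $k$ defined by the single relation $1>k$ (labels $2,\ldots,k-1$ isolated). Then for every $n\geq 0$, the number of $n$-permutations avoiding $p$ equals the number of $n$-permutations $\sigma$ such that, for every cycle $c$ of $\sigma$ (in its disjoint cycle decomposition), $\max(c)-\min(c)\leq k-2$, i.e. the smallest integer interval containing all elements of $c$ has at most $k-1$ elements.
   Context: An $n$-permutation is a word $\pi=\pi_1\cdots\pi_n$ containing each of $1,\ldots,n$ exactly once (equivalently a bijection of $\{1,\ldots,n\}$, which has a decomposition into disjoint cycles). A partially ordered pattern (POP) $p$ of length $k$ is a partial order on the label set $\{1,\ldots,k\}$; it is described by a set of generating relations, where a relation $x>y$ means that in an occurrence the entry in the $x$-th chosen position must be larger than the entry in the $y$-th chosen position, and labels not involved in any relation are unconstrained. An $n$-permutation $\pi$ contains $p$ if there are indices $1\leq i_1<\cdots<i_k\leq n$ such that $\pi_{i_x}>\pi_{i_y}$ whenever $x>y$ in the partial order; otherwise $\pi$ avoids $p$. *)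

From mathcomp Require Import all_boot all_fingroup.
Set Implicit Arguments. Unset Strict Implicit. Unset Printing Implicit Defensive.

(* A POP of length k is given by a list of generating relations (x, y) with
   x y : 'I_k, meaning "x > y" (labels are 0-based here: label i+1 of the paper
   is the ordinal i). *)
Definition pop (k : nat) := seq ('I_k * 'I_k).

(* pi contains p : there are indices i_1 < ... < i_k (a strictly increasing
   map f : 'I_k -> 'I_n) such that pi(i_x) > pi(i_y) for every relation x > y.
   (Satisfying the generating relations is equivalent to satisfying their
   transitive closure.) *)
Definition contains (n k : nat) (s : 'S_n) (p : pop k) : bool :=
  [exists f : {ffun 'I_k -> 'I_n},
     [forall x : 'I_k, forall y : 'I_k, (x < y)%N ==> (f x < f y)%N] &&
     all (fun r => (s (f r.1) > s (f r.2))%N) p].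

Definition avoids (n k : nat) (s : 'S_n) (p : pop k) : bool := ~~ contains s p.

Definition pop_first_gt_last (k : nat) : pop k.+3 := [:: (ord0, ord_max)].

Definition cycle_max (n : nat) (s : 'S_n) (x : 'I_n) : nat :=
  \max_(y in porbit s x) (y : nat).
Definition cycle_min (n : nat) (s : 'S_n) (x : 'I_n) : nat :=
  \big[minn/(x : nat)]_(y in porbit s x) (y : nat).

Definition cycles_spread_le (n : nat) (s : 'S_n) (d : nat) : bool :=
  [forall x : 'I_n, cycle_max s x - cycle_min s x <= d].

From mathcomp Require Import all_boot all_fingroup zify.
Set Implicit Arguments. Unset Strict Implicit. Unset Printing Implicit Defensive.

(* 1. A permutation s avoids the POP iff every inversion i < j, s j < s i of s
      is short: j - i <= m + 1 (an occurrence is exactly a long inversion,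
      padded with the k - 2 unconstrained positions in between).
   2. Passing to t = s^-1, this says that every entry t b lies within m + 1
      below the running maximum of t at position b ("records_close").
   3. Cut t into blocks, each starting at a left-to-right maximum (record).
      The fundamental transformation [fundamental t] is the permutation whose
      cycles are the blocks of t, each read as a cycle starting from its
      record; it is the conjugate by t of the permutation [block_perm t]
      rotating every block of positions.  A cycle then has maximum equal to
      its record, so all cycles have spread <= d iff t is "records_close"
      with bound d.
   4. The fundamental transformation is injective (t is recovered position by
      position), hence a bijection of 'S_n; together with inversion this
      gives the required equality of cardinalities. *)

Lemma bigmin_leq (T : finType) (A : {pred T}) (F : T -> nat) x0 y :
  y \in A -> \big[minn/x0]_(z in A) F z <= F y.
Proof.
move=> yA; suff: forall r : seq T, y \in r -> \big[minn/x0]_(z <- r | z \in A) F z <= F y.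
  by apply; rewrite mem_index_enum.
elim=> [//|a r IH]; rewrite inE big_cons => /orP[/eqP <-|yr].
  by rewrite yA geq_minl.
by case: ifP => _; rewrite ?geq_min IH ?orbT.
Qed.

Lemma leq_bigmin (T : finType) (A : {pred T}) (F : T -> nat) x0 c :
  c <= x0 -> (forall z, z \in A -> c <= F z) -> c <= \big[minn/x0]_(z in A) F z.
Proof.
move=> c_x0 c_F; elim/big_ind: _ => // a b ca cb.
by rewrite leq_min ca cb.
Qed.

Lemma porbit_step (T : finType) (s : {perm T}) x y :
  x \in porbit s y -> s x \in porbit s y.
Proof.
move=> xy; have /eqP <- : porbit s x == porbit s y by rewrite eq_porbit_mem.
by have := mem_porbit s 1 x; rewrite expg1.
Qed.

Section RecordBlocks.

Variables (n : nat) (t : 'S_n).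

(* The position of the largest value of t among positions 0, ..., i: the
   record (left-to-right maximum) starting the block that contains i. *)
Definition record_pos (i : 'I_n) : 'I_n := [arg max_(j > i | j <= i) (t j : nat)].

Lemma record_pos_le (i : 'I_n) : record_pos i <= i.
Proof. by rewrite /record_pos; case: arg_maxnP. Qed.

Lemma record_pos_max (i j : 'I_n) : j <= i -> t j <= t (record_pos i).
Proof. by rewrite /record_pos; case: arg_maxnP => // k _ kmax /kmax. Qed.

Lemma record_posE (i j : 'I_n) :
  j <= i -> (forall k : 'I_n, k <= i -> t k <= t j) -> record_pos i = j.
Proof.
move=> ji jmax; apply: (@perm_inj _ t); apply: val_inj; apply/eqP.
by rewrite eqn_leq record_pos_max // jmax // record_pos_le.
Qed.

Lemma record_pos_idem (i : 'I_n) : record_pos (record_pos i) = record_pos i.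
Proof.
apply: record_posE => // k ki; apply: record_pos_max.
exact: leq_trans ki (record_pos_le i).
Qed.

Lemma record_pos_lt (i : 'I_n) : record_pos i != i -> t i < t (record_pos i).
Proof.
move=> not_rec; rewrite ltn_neqAle record_pos_max // andbT.
apply/negP => /eqP /val_inj /perm_inj e.
by rewrite -e eqxx in not_rec.
Qed.

Definition ord_succ (i : 'I_n) : 'I_n := insubd i i.+1.

Lemma val_ord_succ (i : 'I_n) : i.+1 < n -> val (ord_succ i) = i.+1.
Proof. by move=> lt_in; rewrite /ord_succ val_insubd lt_in. Qed.

Definition continues_block (i : 'I_n) : bool :=
  (i.+1 < n) && (t (ord_succ i) < t (record_pos i)).

(* Rotation of the blocks: go to the next position of the block, or back to
   the record at the end of the block. *)
Definition block_next (i : 'I_n) : 'I_n :=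
  if continues_block i then ord_succ i else record_pos i.

Lemma succ_neq_record (i j : 'I_n) : continues_block i -> ord_succ i <> record_pos j.
Proof.
move=> /andP[lt_in lt_next] e.
have : t (record_pos i) <= t (record_pos j).
  apply: record_pos_max; apply: leq_trans (record_pos_le i) _.
  by have := record_pos_le j; rewrite -e val_ord_succ // => /ltnW.
by rewrite -e leqNgt lt_next.
Qed.

Lemma record_pos_block_end (i j : 'I_n) :
  i < j -> ~~ continues_block i -> record_pos i <> record_pos j.
Proof.
move=> ij ends e.
have lt_in : i.+1 < n by apply: leq_ltn_trans ij (ltn_ord j).
move: ends; rewrite /continues_block lt_in /= -leqNgt leq_eqVlt.
case/orP=> [/eqP /val_inj /perm_inj e_rec|lt_rec].
  by have := record_pos_le i; rewrite e_rec val_ord_succ // ltnn.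
have : t (ord_succ i) <= t (record_pos j) by apply: record_pos_max; rewrite val_ord_succ.
by rewrite -e leqNgt lt_rec.
Qed.

Lemma block_next_inj : injective block_next.
Proof.
move=> i j; rewrite /block_next.
case: ifP => ci; case: ifP => cj => e.
- apply: val_inj; apply/eqP; rewrite -eqSS.
  by move: ci cj => /andP[ci _] /andP[cj _]; rewrite -(val_ord_succ ci) -(val_ord_succ cj) e.
- by case: (succ_neq_record ci e).
- by case: (succ_neq_record cj (esym e)).
- case: (ltngtP i j) => [ij|ji|/val_inj //].
  + by case: (record_pos_block_end ij (negbT ci) e).
  + by case: (record_pos_block_end ji (negbT cj) (esym e)).
Qed.

Lemma record_pos_next (i : 'I_n) : record_pos (block_next i) = record_pos i.
Proof.
rewrite /block_next; case: ifP => [/andP[lt_in lt_next]|_]; last exact: record_pos_idem.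
apply: record_posE; first by rewrite val_ord_succ // (leq_trans (record_pos_le i)).
move=> k; rewrite val_ord_succ // leq_eqVlt => /orP[/eqP e|ki].
  by rewrite (_ : k = ord_succ i) 1?ltnW //; apply: val_inj; rewrite /= val_ord_succ.
exact: record_pos_max.
Qed.

Definition block_perm : 'S_n := perm block_next_inj.

Lemma block_permE (i : 'I_n) : block_perm i = block_next i.
Proof. exact: permE. Qed.

Lemma record_pos_iter k (i : 'I_n) : record_pos ((block_perm ^+ k)%g i) = record_pos i.
Proof.
elim: k => [|k IH]; first by rewrite expg0 perm1.
by rewrite permX /= -permX block_permE record_pos_next.
Qed.

Lemma block_perm_cases (j : 'I_n) : block_perm j = record_pos j \/ val (block_perm j) = j.+1.
Proof.
rewrite block_permE /block_next; case: ifP => [/andP[lt_jn _]|_]; last by left.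
by right; rewrite val_ord_succ.
Qed.

Lemma block_perm_pred (j : 'I_n) : record_pos j != j ->
  exists j' : 'I_n, [/\ j'.+1 = j, block_perm j' = j & record_pos j' = record_pos j].
Proof.
move=> not_rec; have lt_rec := record_pos_lt not_rec.
have lt_j : record_pos j < j by rewrite ltn_neqAle record_pos_le andbT val_eqE.
have lt_jn : j.-1 < n by apply: leq_ltn_trans (ltn_ord j); lia.
pose j' : 'I_n := Ordinal lt_jn.
have succ_j' : j'.+1 = j by rewrite /= prednK //; lia.
have rec_j' : record_pos j' = record_pos j.
  by apply: record_posE => /= [|k kj]; [lia | apply: record_pos_max; lia].
have lt_j'n : j'.+1 < n by rewrite succ_j'.
have next_j' : ord_succ j' = j by apply: val_inj; rewrite val_ord_succ.
exists j'; split=> //.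
by rewrite block_permE /block_next /continues_block lt_j'n next_j' rec_j' lt_rec.
Qed.

Lemma mem_block_start (j : 'I_n) : j \in porbit block_perm (record_pos j).
Proof.
have [m lt_jm] := ubnP j; elim: m j lt_jm => // m IH j /ltnSE le_jm.
have [->|not_rec] := eqVneq (record_pos j) j; first exact: porbit_id.
have [j' [succ_j' <- <-]] := block_perm_pred not_rec.
by apply/porbit_step/IH; rewrite -ltnS succ_j'.
Qed.

Lemma mem_block_orbit (i j : 'I_n) : (j \in porbit block_perm i) = (record_pos j == record_pos i).
Proof.
apply/idP/eqP => [/porbitP [k ->]|e]; first by rewrite record_pos_iter.
have /eqP -> : porbit block_perm i == porbit block_perm (record_pos i).
  by rewrite eq_porbit_mem mem_block_start.
by rewrite -e mem_block_start.
Qed.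

End RecordBlocks.

(* The fundamental transformation: the blocks of t, read as cycles. *)
Definition fundamental n (t : 'S_n) : 'S_n := (block_perm t ^ t)%g.

Lemma fundamentalE n (t : 'S_n) j : fundamental t (t j) = t (block_perm t j).
Proof. by rewrite /fundamental permJ. Qed.

Lemma mem_fundamental_orbit n (t : 'S_n) (i : 'I_n) y :
  (y \in porbit (fundamental t) (t i)) = (record_pos t ((t^-1)%g y) == record_pos t i).
Proof.
rewrite -mem_block_orbit; apply/porbitP/porbitP => [[k e]|[k e]]; exists k.
  by move: e; rewrite /fundamental -conjXg permJ -{1}(permKV t y) => /perm_inj.
by rewrite /fundamental -conjXg permJ -e permKV.
Qed.

Lemma cycle_max_fundamental n (t : 'S_n) i :
  cycle_max (fundamental t) (t i) = t (record_pos t i).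
Proof.
apply/eqP; rewrite eqn_leq; apply/andP; split.
  apply/bigmax_leqP => y; rewrite mem_fundamental_orbit => /eqP e.
  by rewrite -{1}(permKV t y) -e record_pos_max.
apply: (bigmax_sup (t (record_pos t i))) => //.
by rewrite mem_fundamental_orbit permK record_pos_idem.
Qed.

Definition records_close n (t : 'S_n) (d : nat) : bool :=
  [forall b, t (record_pos t b) <= t b + d].

Lemma spread_fundamental n (t : 'S_n) d :
  cycles_spread_le (fundamental t) d = records_close t d.
Proof.
apply/forallP/forallP => close b.
  have := close (t b); rewrite cycle_max_fundamental.
  have : cycle_min (fundamental t) (t b) <= t b.
    by apply: bigmin_leq; rewrite mem_fundamental_orbit permK.
  lia.
rewrite -(permKV t b) cycle_max_fundamental; set i := (t^-1)%g b.
have : t (record_pos t i) - d <= cycle_min (fundamental t) (t i).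
  apply: leq_bigmin => [|z]; first by have := close i; lia.
  rewrite mem_fundamental_orbit => /eqP e.
  by have := close ((t^-1)%g z); rewrite e permKV; lia.
lia.
Qed.

Section Recovery.

Variables (n : nat) (t1 t2 : 'S_n) (i : 'I_n).
Hypothesis same_fundamental : fundamental t1 = fundamental t2.
Hypothesis same_prefix : forall j : 'I_n, j < i -> t1 j = t2 j.

(* At a non-record position, t1 i is the image under the common cycle of
   the already known value t1 (i - 1). *)
Lemma recover_non_record : record_pos t1 i != i -> t1 i = t2 i.
Proof.
move=> not_rec; have [j' [succ_j' next_j' _]] := block_perm_pred not_rec.
have lt_j'i : j' < i by rewrite -succ_j'.
have e : t1 i = t2 (block_perm t2 j').
  by rewrite -next_j' -fundamentalE same_fundamental same_prefix // fundamentalE.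
case: (block_perm_cases t2 j') => [back|fwd].
  have lt_rec : record_pos t2 j' < i by have := record_pos_le t2 j'; lia.
  by move: e; rewrite back -same_prefix // => /perm_inj e; rewrite -e ltnn in lt_rec.
by rewrite e (_ : block_perm t2 j' = i) //; apply: val_inj; rewrite fwd.
Qed.

(* At a record position of t1, the value t1 i is the maximum of its cycle,
   which bounds the value of t2 at i. *)
Lemma recover_record : record_pos t1 i = i -> t2 i <= t1 i.
Proof.
move=> rec_i; set j := (t2^-1)%g (t1 i).
have t2j : t2 j = t1 i by rewrite /j permKV.
have le_ij : i <= j.
  rewrite leqNgt; apply/negP => lt_ji.
  have := same_prefix lt_ji; rewrite t2j => /perm_inj e.
  by rewrite e ltnn in lt_ji.
have <- : t2 (record_pos t2 j) = t1 i :> nat.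
  by rewrite -cycle_max_fundamental t2j -same_fundamental cycle_max_fundamental rec_i.
exact: record_pos_max le_ij.
Qed.

End Recovery.

Lemma recover_next n (t1 t2 : 'S_n) (i : 'I_n) :
  fundamental t1 = fundamental t2 ->
  (forall j : 'I_n, j < i -> t1 j = t2 j) -> t1 i = t2 i.
Proof.
move=> E prefix; have prefix' (j : 'I_n) : j < i -> t2 j = t1 j by move/prefix.
have [rec1|not_rec1] := eqVneq (record_pos t1 i) i; last first.
  exact: recover_non_record E prefix not_rec1.
have [rec2|not_rec2] := eqVneq (record_pos t2 i) i; last first.
  exact/esym/(recover_non_record (esym E) prefix' not_rec2).
apply: val_inj; apply/eqP; rewrite eqn_leq.
by rewrite (recover_record E prefix rec1) (recover_record (esym E) prefix' rec2).
Qed.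

Lemma fundamental_inj n : injective (@fundamental n).
Proof.
move=> t1 t2 E; apply/permP => i.
have [m lt_im] := ubnP i; elim: m i lt_im => // m IH i /ltnSE le_im.
by apply: recover_next E _ => j lt_ji; apply: IH; lia.
Qed.

Definition inversions_short n (s : 'S_n) (d : nat) : bool :=
  [forall i : 'I_n, forall j : 'I_n, ((i < j) && (s j < s i)) ==> (j <= i + d)].

(* Step 2: inverting a permutation exchanges positions and values, turning
   short inversions into values close to the running maximum. *)
Lemma inversions_short_inv n (t : 'S_n) d :
  inversions_short (t^-1)%g d = records_close t d.
Proof.
apply/forallP/forallP => short b.
  have [->|not_rec] := eqVneq (record_pos t b) b; first by rewrite leq_addr.
  have lt_b : record_pos t b < b by rewrite ltn_neqAle record_pos_le andbT val_eqE.
  have /forallP /(_ (t (record_pos t b))) := short (t b).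
  by rewrite !permK record_pos_lt // lt_b.
apply/forallP => j; rewrite -(permKV t b) -(permKV t j).
set a := (t^-1)%g j; set c := (t^-1)%g b; rewrite !permK.
apply/implyP => /andP[_ lt_ac].
by apply: leq_trans (short c); apply: record_pos_max; apply: ltnW.
Qed.

Lemma increasing_spread k n (f : 'I_k.+1 -> 'I_n) :
  (forall x y : 'I_k.+1, x < y -> f x < f y) -> f ord0 + k <= f ord_max.
Proof.
move=> incr; suff: forall l, l <= k -> f ord0 + l <= f (inord l).
  by move/(_ k (leqnn k)); rewrite (_ : inord k = ord_max) //; apply: val_inj; rewrite /= inordK.
elim=> [|l IH] lt_lk.
  by rewrite addn0 (_ : inord 0 = ord0) //; apply: val_inj; rewrite /= inordK.
have : f (inord l) < f (inord l.+1) by apply: incr; rewrite !inordK //; lia.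
by have := IH (ltnW lt_lk); lia.
Qed.

Lemma long_inversion_of_contains m n (s : 'S_n) :
  contains s (pop_first_gt_last m) -> ~~ inversions_short s m.+1.
Proof.
case/existsP=> f /andP[/forallP incr]; rewrite /= andbT => inv.
have /increasing_spread spread : forall x y : 'I_m.+3, x < y -> f x < f y.
  by move=> x y xy; move/forallP/(_ y)/implyP: (incr x); apply.
apply/forallPn; exists (f ord0); apply/forallPn; exists (f ord_max).
by rewrite negb_imply inv andbT -ltnNge; lia.
Qed.

(* Conversely a long inversion i, j is an occurrence, using j and the m + 2
   positions starting at i. *)
Lemma contains_of_long_inversion m n (s : 'S_n) (i j : 'I_n) :
  s j < s i -> i + m.+1 < j -> contains s (pop_first_gt_last m).
Proof.
move=> inv long.
have lt_n x : i + (x : 'I_m.+3) < n by have := ltn_ord x; have := ltn_ord j; lia.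
pose f := [ffun x : 'I_m.+3 => if x == ord_max then j else insubd i (i + x)].
have fE x : x != ord_max -> val (f x) = i + x.
  by move=> xmax; rewrite ffunE (negbTE xmax) val_insubd lt_n.
have fmax : f ord_max = j by rewrite ffunE eqxx.
have f0 : f ord0 = i by apply: val_inj; rewrite fE //= addn0.
apply/existsP; exists f; rewrite /= f0 fmax inv !andbT.
apply/forallP => x; apply/forallP => y; apply/implyP => xy.
have xmax : x != ord_max by apply/eqP => e; move: xy; rewrite e /=; have := ltn_ord y; lia.
have := ltn_ord x; rewrite fE //; move: xmax; rewrite -val_eqE /=.
by have [->|ymax] := eqVneq y ord_max; [rewrite fmax; lia | rewrite fE //; lia].
Qed.

Lemma avoids_iff m n (s : 'S_n) :
  avoids s (pop_first_gt_last m) = inversions_short s m.+1.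
Proof.
apply/idP/idP => [avoid|short]; last first.
  by apply/negP => /long_inversion_of_contains; rewrite short.
apply/forallP => i; apply/forallP => j; apply/implyP => /andP[_ inv].
rewrite leqNgt; apply/negP => long.
by move: avoid; rewrite /avoids (contains_of_long_inversion inv long).
Qed.

Theorem theorem2p7 (m n : nat) :
  #|[set s : 'S_n | avoids s (pop_first_gt_last m)]| =
  #|[set s : 'S_n | cycles_spread_le s (m.+3 - 2)]|.
Proof.
have -> : m.+3 - 2 = m.+1 by lia.
have avoidE : [set s : 'S_n | avoids s (pop_first_gt_last m)]
              = [set s : 'S_n | inversions_short s m.+1].
  by apply/setP => s; rewrite !inE avoids_iff.
have invE : [set t : 'S_n | records_close t m.+1]
            = (@invg _) @^-1: [set s : 'S_n | inversions_short s m.+1].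
  by apply/setP => t; rewrite !inE inversions_short_inv.
have fundE : [set t : 'S_n | records_close t m.+1]
             = (@fundamental n) @^-1: [set s : 'S_n | cycles_spread_le s m.+1].
  by apply/setP => t; rewrite !inE spread_fundamental.
rewrite avoidE -(card_preimset _ (@invg_inj _)) -invE fundE.
exact/card_preimset/fundamental_inj.
Qed.
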